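(* Let $\Gamma=A\ast B$ with $A,B$ non-trivial, let $f=f_A\ast f_B$ be a split quasimorphism with homogenization $\widehat f$ and bounded cohomology class $\omega_f=[\partial f]_\mathrm{b}\in\mathrm{H}^2_\mathrm{b}(\Gamma,\mathbb{R})$. Then \[ \|\omega_f\|=\tfrac12\,\mathrm{def}\,\widehat f=\mathrm{def}\, f=\max\{\mathrm{def}\, f_A,\mathrm{def}\, f_B\}. \] In particular, $f$ is a minimal defect representative for its class.
   Context: A quasimorphism is a map $f:\Gamma\to\mathbb{R}$ with $\mathrm{def}\, f=\sup_{g,h}|f(gh)-f(g)-f(h)|<\infty$; it is alternating if $f(g^{-1})=-f(g)$. Its homogenization is $\widehat f(g)=\lim_{n\to\infty}f(g^n)/n$. $\omega_f$ is the class in second bounded cohomology (bounded bar complex, trivial coefficients) of the bounded 2-cocycle $\partial f(g,h)=f(g)+f(h)-f(gh)$, and the Gromov norm is $\|\omega_f\|=\inf\{\mathrm{def}\,(f+\beta):\beta:\Gamma\to\mathbb{R}\text{ bounded}\}$. Each $1\neq g\in A\ast B$ has a unique normal form $g=a_1b_1\cdots a_nb_n$ ($a_i\in A$, $b_i\in B$, all non-trivial except possibly $a_1$ or $b_n$). For alternating quasimorphisms $f_A,f_B$ on $A,B$ the split quasimorphism is $f(1)=0$, $f(a_1b_1\cdots a_nb_n)=f_A(a_1)+f_B(b_1)+\dots+f_A(a_n)+f_B(b_n)$. *)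

From mathcomp Require Import all_boot all_order all_algebra.
From mathcomp Require Import all_classical all_reals all_analysis.
Set Implicit Arguments. Unset Strict Implicit. Unset Printing Implicit Defensive.
Import Order.TTheory GRing.Theory Num.Theory.
Import numFieldNormedType.Exports.
Local Open Scope classical_set_scope.
Local Open Scope ring_scope.

Section Quasi.
Variables (R : realType) (G : Type) (mul : G -> G -> G).

Definition defect_set (f : G -> R) : set R :=
  [set r | exists g h, r = `|f (mul g h) - f g - f h|].

Definition is_quasimorphism (f : G -> R) : Prop :=
  exists M : R, forall g h, `|f (mul g h) - f g - f h| <= M.

Definition defect (f : G -> R) : R := sup (defect_set f).

Definition bounded_cochain (beta : G -> R) : Prop :=
  exists M : R, forall g, `|beta g| <= M.

(* Gromov norm of omega_f = [d f]_b :
   inf { def (f + beta) : beta : G -> R bounded } *)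
Definition gromov_norm_class (f : G -> R) : R :=
  inf [set r | exists beta : G -> R, bounded_cochain beta /\ r = defect (f \+ beta)].

End Quasi.

Definition alternating_qm (R : realType) (G : Type) (inv : G -> G) (f : G -> R) :=
  forall g, f (inv g) = - f g.

(* The free product A * B, realized by reduced words (normal forms)    *)
Section FreeProduct.
Variables A B : groupType.

Definition letter := (A + B)%type.

Definition nontriv (x : letter) : bool :=
  match x with inl a => a != 1%g | inr b => b != 1%g end.

Definition same_side (x y : letter) : bool :=
  match x, y with inl _, inl _ => true | inr _, inr _ => true | _, _ => false end.

Fixpoint reduced (w : seq letter) : bool :=
  match w with
  | [::] => true
  | x :: w' => [&& nontriv x, reduced w' &
                  (match w' with y :: _ => ~~ same_side x y | [::] => true end)]
  end.

Definition cons_letter (x : letter) (w : seq letter) : seq letter :=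
  match x with
  | inl a => if a == 1%g then w else
      match w with
      | inl a' :: w' => if (a * a')%g == 1%g then w' else inl (a * a')%g :: w'
      | _ => inl a :: w
      end
  | inr b => if b == 1%g then w else
      match w with
      | inr b' :: w' => if (b * b')%g == 1%g then w' else inr (b * b')%g :: w'
      | _ => inr b :: w
      end
  end.

Lemma cons_letter_reduced x w : reduced w -> reduced (cons_letter x w).
Proof.
case: x => [a|b] /=.
- case: eqP => [//|/eqP a1].
  case: w => [|[a'|b'] w'] /=; first by rewrite a1.
  + move=> /and3P[_ rw' h]; case: eqP => [_|/eqP c1] //=.
    by rewrite c1 rw' /=; case: w' h {rw'} => [|[]].
  + by move=> ->; rewrite a1.
- case: eqP => [//|/eqP b1].
  case: w => [|[a'|b'] w'] /=; first by rewrite b1.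
  + by move=> ->; rewrite b1.
  + move=> /and3P[_ rw' h]; case: eqP => [_|/eqP c1] //=.
    by rewrite c1 rw' /=; case: w' h {rw'} => [|[]].
Qed.

Definition free_product := {w : seq letter | reduced w}.

Definition fp_one : free_product := exist _ [::] isT.

Lemma foldr_cons_reduced (w1 w2 : seq letter) :
  reduced w2 -> reduced (foldr cons_letter w2 w1).
Proof. by elim: w1 => //= x w1 IH r2; apply: cons_letter_reduced; apply: IH. Qed.

Definition fp_mul (g h : free_product) : free_product :=
  exist _ (foldr cons_letter (sval h) (sval g))
        (foldr_cons_reduced (sval g) (svalP h)).

Definition inv_letter (x : letter) : letter :=
  match x with inl a => inl (a^-1)%g | inr b => inr (b^-1)%g end.

Lemma foldl_inv_reduced (acc w : seq letter) :
  reduced acc -> reduced (foldl (fun acc x => cons_letter (inv_letter x) acc) acc w).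
Proof.
by elim: w acc => //= x w IH acc racc; apply: IH; apply: cons_letter_reduced.
Qed.

Definition fp_inv (g : free_product) : free_product :=
  exist _ (foldl (fun acc x => cons_letter (inv_letter x) acc) [::] (sval g))
        (foldl_inv_reduced (sval g) (isT : reduced [::])).

Definition fp_pow (g : free_product) (n : nat) : free_product :=
  iter n (fp_mul g) fp_one.

Variable R : realType.

Definition split_qm (fA : A -> R) (fB : B -> R) (g : free_product) : R :=
  \sum_(x <- sval g) (match x with inl a => fA a | inr b => fB b end).

Definition homogenization (f : free_product -> R) (g : free_product) : R :=
  limn (fun n : nat => f (fp_pow g n) / n%:R).

End FreeProduct.

From HB Require Import structures.
From mathcomp Require Import all_boot all_order all_algebra.
From mathcomp Require Import all_classical all_reals all_analysis.
From mathcomp Require Import ring lra.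
Set Implicit Arguments.
Unset Strict Implicit.
Unset Printing Implicit Defensive.
Import Order.TTheory GRing.Theory Num.Theory.
Import numFieldNormedType.Exports.
Local Open Scope classical_set_scope.
Local Open Scope ring_scope.

(* Multiplying two normal forms cancels a run of mutually inverse letters, which
   contributes nothing to f since f_A and f_B are alternating, and then merges at
   most one pair of letters from the same factor, which contributes one defect term
   of f_A or f_B; hence def f <= max (def f_A) (def f_B), with equality as A and B
   embed in A * B.
   Any homogenization satisfies def \hat f <= 2 def f.  Conversely, for s, t in A
   and p <> 1 in B, the words g = t p s p and h = p^-1 t p s are cyclically
   reduced, as is k = p (st) p (st), which is conjugate to g h; on cyclically
   reduced words \hat f = f, so
   \hat f (g h) - \hat f g - \hat f h = 2 (f_A (s t) - f_A s - f_A t),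
   and symmetrically for B.  So def \hat f = 2 def f; as \hat f does not change
   under bounded perturbations, def (f + beta) >= def \hat f / 2 = def f for every
   bounded beta, and the Gromov norm of the class is def f. *)

Lemma ler_normD3 (R : numDomainType) (x y z a b c : R) :
  `|x| <= a -> `|y| <= b -> `|z| <= c -> `|x + y + z| <= a + b + c.
Proof.
move=> xa yb zc; apply: le_trans (ler_normD _ _) (lerD _ zc).
exact: le_trans (ler_normD _ _) (lerD xa yb).
Qed.

Lemma natmul_ub_le0 (R : realType) (x C : R) :
  (forall n : nat, n%:R * x <= C) -> x <= 0.
Proof.
move=> xC; rewrite leNgt; apply/negP => x_gt0.
have C_ge0 : 0 <= C by have := xC 0%N; rewrite mul0r.
have := xC (Num.Def.archi_bound (C / x)).
rewrite -ler_pdivlMr // leNgt => /negP; apply.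
exact: archi_boundP (divr_ge0 C_ge0 (ltW x_gt0)).
Qed.

Lemma natmul_norm_ub_eq0 (R : realType) (x C : R) :
  (forall n : nat, `|n%:R * x| <= C) -> x = 0.
Proof.
move=> xC; apply/le_anti/andP; split.
- by apply: (@natmul_ub_le0 _ _ C) => n; exact: le_trans (ler_norm _) (xC n).
- rewrite -oppr_le0; apply: (@natmul_ub_le0 _ _ C) => n.
  by move: (xC n); rewrite -normrN -mulrN; exact: le_trans (ler_norm _).
Qed.

Lemma le0_of_le_divS (R : realType) (x C : R) :
  (forall k : nat, x <= C / k.+1%:R) -> x <= 0.
Proof.
move=> xC; apply: (@natmul_ub_le0 _ _ `|C|) => -[|k]; first by rewrite mul0r.
by rewrite mulrC -ler_pdivlMr ?ltr0n // (le_trans (xC k)) // ler_wpM2r ?ler_norm.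
Qed.

Section QuasiAdditiveSequence.
Variables (R : realType) (a : nat -> R) (D : R).
Hypothesis a_add : forall m n, `|a (m + n) - a m - a n| <= D.

Let avg n := a n / n%:R.

Lemma quasiadd_ge0 : 0 <= D.
Proof. exact: le_trans (normr_ge0 _) (a_add 0 0). Qed.

Lemma quasiadd_mul n m : `|a (n.+1 * m) - n.+1%:R * a m| <= n%:R * D.
Proof.
elim: n => [|n IH]; first by rewrite mul1n mul1r subrr normr0 mul0r.
have -> : a (n.+2 * m) - n.+2%:R * a m
    = (a (m + n.+1 * m) - a m - a (n.+1 * m)) + (a (n.+1 * m) - n.+1%:R * a m).
  by rewrite mulSn (mulrS _ n.+1); ring.
rewrite -[X in _ <= X * D]natr1 mulrDl mul1r [X in _ <= X]addrC.
exact: le_trans (ler_normD _ _) (lerD (a_add _ _) IH).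
Qed.

Lemma quasiadd_avg_mul n m : `|avg (n.+1 * m.+1) - avg m.+1| <= D / m.+1%:R.
Proof.
have n_gt0 : 0 < n.+1%:R :> R by rewrite ltr0n.
have m_gt0 : 0 < m.+1%:R :> R by rewrite ltr0n.
have -> : avg (n.+1 * m.+1) - avg m.+1
    = (a (n.+1 * m.+1) - n.+1%:R * a m.+1) / (n.+1%:R * m.+1%:R).
  by rewrite /avg natrM; field; rewrite !gt_eqF.
rewrite normrM normfV (gtr0_norm (mulr_gt0 n_gt0 m_gt0)) ler_pdivrMr ?mulr_gt0 //.
apply: le_trans (quasiadd_mul _ _) _.
have -> : D / m.+1%:R * (n.+1%:R * m.+1%:R) = n.+1%:R * D.
  by field; rewrite gt_eqF.
by rewrite ler_wpM2r ?quasiadd_ge0 // ler_nat.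
Qed.

Lemma quasiadd_avg_close n m :
  `|avg n.+1 - avg m.+1| <= D / n.+1%:R + D / m.+1%:R.
Proof.
have -> : avg n.+1 - avg m.+1
    = (avg (n.+1 * m.+1) - avg m.+1) - (avg (m.+1 * n.+1) - avg n.+1).
  by rewrite mulnC; ring.
apply: le_trans (ler_normB _ _) _.
by rewrite addrC lerD // quasiadd_avg_mul.
Qed.

Lemma quasiadd_cvg : cvgn avg.
Proof.
apply: R_complete; apply: cauchy_exP => eps eps_gt0.
have C_gt0 : 0 < D + D + 1 by have := quasiadd_ge0; lra.
have [k hk] := ltr_add_invr (divr_gt0 eps_gt0 C_gt0); rewrite add0r in hk.
exists (avg k.+1), k.+1 => // -[//|n] /= kn.
rewrite /ball /=; apply: le_lt_trans (quasiadd_avg_close k n) _.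
have Dn : D / n.+1%:R <= D / k.+1%:R.
  by rewrite ler_wpM2l ?quasiadd_ge0 // lef_pV2 ?posrE ?ltr0n // ler_nat.
apply: le_lt_trans (lerD (lexx _) Dn) _.
have : (D + D + 1) * k.+1%:R^-1 < eps.
  by rewrite mulrC -ltr_pdivlMr.
have : 0 <= k.+1%:R^-1 :> R by rewrite invr_ge0.
rewrite !mulrDl mul1r; set t := D / _; set c := _^-1; lra.
Qed.

Lemma quasiadd_lim_close n : `|a n - n%:R * limn avg| <= D.
Proof.
case: n => [|m].
  by rewrite mul0r subr0; have := a_add 0 0; rewrite addn0 subrr sub0r normrN.
suff avg_close : `|avg m.+1 - limn avg| <= D / m.+1%:R.
  have m_gt0 : 0 < m.+1%:R :> R by rewrite ltr0n.
  have -> : a m.+1 - m.+1%:R * limn avg = m.+1%:R * (avg m.+1 - limn avg).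
    by rewrite /avg; field; rewrite gt_eqF.
  by rewrite normrM gtr0_norm // mulrC -ler_pdivlMr.
have close k n : (k <= n)%N -> `|avg n.+1 - avg m.+1| <= D / k.+1%:R + D / m.+1%:R.
  move=> kn; apply: le_trans (quasiadd_avg_close n m) _; rewrite lerD2r.
  by rewrite ler_wpM2l ?quasiadd_ge0 // lef_pV2 ?posrE ?ltr0n // ler_nat.
set c := D / m.+1%:R.
rewrite ler_norml; apply/andP; split; rewrite -subr_le0;
  apply: (@le0_of_le_divS _ _ D) => k; set e := D / k.+1%:R.
- suff : limn avg <= avg m.+1 + c + e by lra.
  apply: limr_le; first exact: quasiadd_cvg.
  exists k.+1 => // -[//|n] /= kn.
  by move: (close k n kn); rewrite -/c -/e ler_norml => /andP[_ ?]; lra.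
- suff : avg m.+1 - c - e <= limn avg by lra.
  apply: limr_ge; first exact: quasiadd_cvg.
  exists k.+1 => // -[//|n] /= kn.
  by move: (close k n kn); rewrite -/c -/e ler_norml => /andP[? _]; lra.
Qed.
End QuasiAdditiveSequence.

Section Homogenization.
Variables (R : realType) (G : groupType).

Definition homog (psi : G -> R) (g : G) : R := limn (fun n => psi (g ^+ n)%g / n%:R).

Section QuasimorphismPowers.
Variables (psi : G -> R) (D : R).
Hypothesis psi_def : forall g h, `|psi (g * h)%g - psi g - psi h| <= D.

Lemma homog_pow_close g n : `|psi (g ^+ n)%g - n%:R * homog psi g| <= D.
Proof. by apply: quasiadd_lim_close => m k; rewrite expgnDr. Qed.

Lemma homog_close g : `|homog psi g - psi g| <= D.
Proof. by rewrite distrC -[X in psi X]expg1 -[homog _ _]mul1r homog_pow_close. Qed.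

Lemma conjg_close z x :
  `|psi (z ^ x)%g - psi z| <= D + D + `|psi x^-1%g| + `|psi x|.
Proof.
have -> : psi (z ^ x)%g - psi z = (psi (x^-1 * (z * x))%g - psi x^-1%g - psi (z * x)%g)
    + (psi (z * x)%g - psi z - psi x) + psi x^-1%g + psi x by rewrite conjgE; ring.
apply: ler_normD3 => //; exact: le_trans (ler_normD _ _) (lerD _ _).
Qed.

End QuasimorphismPowers.

Lemma homog_eq_of_pow_close (phi psi : G -> R) (Dphi Dpsi C : R) (g h : G) :
  (forall x y, `|phi (x * y)%g - phi x - phi y| <= Dphi) ->
  (forall x y, `|psi (x * y)%g - psi x - psi y| <= Dpsi) ->
  (forall n, `|phi (g ^+ n)%g - psi (h ^+ n)%g| <= C) ->
  homog phi g = homog psi h.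
Proof.
move=> phi_def psi_def close; apply/eqP; rewrite -subr_eq0; apply/eqP.
apply: (@natmul_norm_ub_eq0 _ _ (Dphi + C + Dpsi)) => n.
have -> : n%:R * (homog phi g - homog psi h)
    = - (phi (g ^+ n)%g - n%:R * homog phi g) + (phi (g ^+ n)%g - psi (h ^+ n)%g)
      + (psi (h ^+ n)%g - n%:R * homog psi h) by ring.
apply: ler_normD3 => //; last exact: homog_pow_close.
by rewrite normrN (homog_pow_close phi_def).
Qed.

Section ConjugationInvariance.
Variables (psi : G -> R) (D : R).
Hypothesis psi_def : forall g h, `|psi (g * h)%g - psi g - psi h| <= D.

Lemma homog_conjg y x : homog psi (y ^ x)%g = homog psi y.
Proof.
apply: (homog_eq_of_pow_close (C := D + D + `|psi x^-1%g| + `|psi x|) psi_def psi_def).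
by move=> n; rewrite -conjXg conjg_close.
Qed.

(* q is the product of the conjugates of h by the powers g ^+ j, j < n. *)
Lemma expg_mul_decomp g h n : exists2 q,
  ((g * h) ^+ n = g ^+ n * q)%g & `|psi q - n%:R * homog psi h| <= n.*2.+1%:R * D.
Proof.
elim: n => [|n [q gh_n q_close]].
  exists 1%g; first by rewrite !expg0 mulg1.
  have := psi_def 1 1; rewrite mulg1 mul0r subr0 -addrA -opprD distrC.
  by rewrite addrK /= mulr1n mul1r.
exists (h ^ (g ^+ n) * q)%g.
  by rewrite expgS gh_n -mulgA (mulgA h) (conjgC h) !mulgA expgS.
have -> : psi (h ^ (g ^+ n) * q)%g - n.+1%:R * homog psi h
    = (psi (h ^ (g ^+ n) * q)%g - psi (h ^ (g ^+ n))%g - psi q)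
      + (psi (h ^ (g ^+ n))%g - homog psi (h ^ (g ^+ n))%g)
      + (psi q - n%:R * homog psi h).
  by rewrite homog_conjg -natr1; ring.
have -> : n.+1.*2.+1%:R * D = D + D + n.*2.+1%:R * D.
  by rewrite doubleS -!natr1; ring.
by rewrite ler_normD3 // distrC homog_close.
Qed.

Lemma homog_defect g h :
  `|homog psi (g * h)%g - homog psi g - homog psi h| <= D + D.
Proof.
set X := homog psi (g * h)%g - homog psi g - homog psi h.
rewrite -subr_le0; apply: (@natmul_ub_le0 _ _ (4%:R * D)) => n.
have [q gh_n q_close] := expg_mul_decomp g h n.
have : `|n%:R * X| <= D + D + D + n.*2.+1%:R * D.
  have -> : n%:R * X = (psi (g ^+ n * q)%g - psi (g ^+ n)%g - psi q)
      - (psi ((g * h) ^+ n)%g - n%:R * homog psi (g * h)%g)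
      + (psi (g ^+ n)%g - n%:R * homog psi g) + (psi q - n%:R * homog psi h).
    by rewrite gh_n /X; ring.
  apply: le_trans (ler_normD _ _) (lerD _ q_close).
  by rewrite ler_normD3 ?normrN // homog_pow_close.
have -> : n.*2.+1%:R = n%:R + n%:R + 1 :> R by rewrite -natr1 -addnn natrD.
rewrite normrM ger0_norm ?ler0n //; set t := n%:R; set x := `|X|.
lra.
Qed.

End ConjugationInvariance.
End Homogenization.

Section Defect.
Variables (R : realType) (G : Type) (mul : G -> G -> G).
Implicit Types (f beta : G -> R).

Lemma defect_ub f : is_quasimorphism mul f ->
  forall g h, `|f (mul g h) - f g - f h| <= defect mul f.
Proof.
by move=> [M fM] g h; apply: ub_le_sup; [exists M => _ [x [y ->]] | exists g, h].
Qed.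

Lemma defect_le (g0 : G) f (M : R) :
  (forall g h, `|f (mul g h) - f g - f h| <= M) -> defect mul f <= M.
Proof.
move=> fM; apply: ge_sup => [|_ [x [y ->]] //].
by exists `|f (mul g0 g0) - f g0 - f g0|, g0, g0.
Qed.

Lemma quasimorphismD_bounded f beta : is_quasimorphism mul f ->
  bounded_cochain beta -> is_quasimorphism mul (f \+ beta).
Proof.
move=> [D fD] [M bM]; exists (D + M + M + M) => g h /=.
have -> : f (mul g h) + beta (mul g h) - (f g + beta g) - (f h + beta h)
    = (f (mul g h) - f g - f h) + beta (mul g h) - beta g - beta h by ring.
apply: le_trans (ler_normB _ _) (lerD _ (bM h)).
apply: le_trans (ler_normB _ _) (lerD _ (bM g)).
exact: le_trans (ler_normD _ _) (lerD (fD g h) (bM _)).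
Qed.

Lemma gromov_norm_class_min f :
  (forall beta, bounded_cochain beta -> defect mul f <= defect mul (f \+ beta)) ->
  gromov_norm_class mul f = defect mul f.
Proof.
move=> f_min; rewrite /gromov_norm_class; set S := (X in inf X).
have f_mem : S (defect mul f).
  exists (fun=> 0); split; first by exists 0 => g; rewrite normr0.
  by congr defect; apply/funext => g /=; rewrite addr0.
have S_lb : forall r, S r -> defect mul f <= r by move=> _ [beta [/f_min ? ->]].
apply/le_anti/andP; split; last exact: lb_le_inf (ex_intro _ _ f_mem) S_lb.
by apply: ge_inf f_mem; exists (defect mul f).
Qed.

End Defect.

Section DefectTransport.
Variables (R : realType) (G H : Type) (mulG : G -> G -> G) (mulH : H -> H -> H).
Variables (phi : H -> G) (f : G -> R).
Hypothesis phiM : {morph phi : x y / mulH x y >-> mulG x y}.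

Lemma defect_comp_le (x0 : H) : is_quasimorphism mulG f ->
  defect mulH (f \o phi) <= defect mulG f.
Proof. by move=> qf; apply: (defect_le x0) => x y /=; rewrite phiM defect_ub. Qed.

Lemma defect_comp_can (psi : G -> H) : cancel psi phi ->
  defect mulH (f \o phi) = defect mulG f.
Proof.
move=> psiK; congr sup; apply/seteqP; split=> _ [x [y ->]] /=.
  by exists (phi x), (phi y); rewrite phiM.
by exists (psi x), (psi y); rewrite /= phiM !psiK.
Qed.

End DefectTransport.

Section GroupDefect.
Variables (R : realType) (G : groupType).
Implicit Types (psi beta : G -> R).

Lemma defect_homog_le psi : is_quasimorphism *%g psi ->
  defect *%g (homog psi) <= defect *%g psi *+ 2.
Proof.
move=> qpsi; apply: (defect_le 1%g) => g h.
by rewrite mulr2n (homog_defect (defect_ub qpsi)).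
Qed.

Lemma homogD_bounded psi beta : is_quasimorphism *%g psi -> bounded_cochain beta ->
  homog (psi \+ beta) = homog psi.
Proof.
move=> qpsi bbeta; have [M bM] := bbeta; apply/funext => g.
have qpsi_beta := quasimorphismD_bounded qpsi bbeta.
apply: (homog_eq_of_pow_close (C := M) (defect_ub qpsi_beta) (defect_ub qpsi)).
by move=> n /=; rewrite addrC addKr.
Qed.

Lemma defect_min_of_homog psi : is_quasimorphism *%g psi ->
  defect *%g (homog psi) = defect *%g psi *+ 2 ->
  forall beta, bounded_cochain beta -> defect *%g psi <= defect *%g (psi \+ beta).
Proof.
move=> qpsi Dhomog beta bbeta.
rewrite -[_ <= _](lerMn2r 2) /= -Dhomog -(homogD_bounded qpsi bbeta).
exact/defect_homog_le/quasimorphismD_bounded.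
Qed.

Lemma homog_comp_morph (H : groupType) (phi : H -> G) psi : monoid.monoid_morphism phi ->
  homog (psi \o phi) = homog psi \o phi.
Proof.
move=> [phi1 phiM]; apply/funext => x.
have phiX n : phi (x ^+ n)%g = (phi x ^+ n)%g.
  by elim: n => // n IH; rewrite !expgS phiM IH.
by rewrite /homog /=; under eq_fun do rewrite phiX.
Qed.

End GroupDefect.

(* Exchanging the factors is an isomorphism of free products; it transports every
   statement about A-letters to B-letters. *)
Definition swap_letter (A B : groupType) (x : letter A B) : letter B A :=
  match x with inl a => inr a | inr b => inl b end.

Section Letters.
Variables A B : groupType.
Local Notation cons := (@cons_letter A B).
Local Notation red := (@reduced A B).
Local Notation swap := (@swap_letter A B).

Lemma swap_letterK : cancel swap (@swap_letter B A).
Proof. by case. Qed.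

Lemma reduced_swap w : reduced (map swap w) = red w.
Proof. by elim: w => //= x w ->; case: x; case: w => [|[] ?]. Qed.

Lemma cons_letter_swap x w : cons_letter (swap x) (map swap w) = map swap (cons x w).
Proof.
by case: x => [a|b] /=; case: eqP => // _; case: w => [|[a'|b'] w] //=; case: eqP.
Qed.

Lemma foldr_cons_swap u w :
  foldr (@cons_letter B A) (map swap w) (map swap u) = map swap (foldr cons w u).
Proof. by elim: u => //= x u ->; rewrite cons_letter_swap. Qed.

Lemma reduced_behead x w : red (x :: w) -> red w.
Proof. by case/and3P. Qed.

Lemma cons_letter_reducedE x w : red (x :: w) -> cons x w = x :: w.
Proof. by case: x => [a|b] /= /and3P[/negPf-> _]; case: w => [|[] ? ?]. Qed.

Lemma cons_letter_inl1 w : cons (inl 1%g) w = w.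
Proof. by rewrite /= eqxx. Qed.

Lemma cons_letter_inlM a a' w : red w ->
  cons (inl a) (cons (inl a') w) = cons (inl (a * a')%g) w.
Proof.
have [->|a'1] := eqVneq a' 1%g; first by rewrite mulg1 cons_letter_inl1.
have [->|a1] := eqVneq a 1%g; first by rewrite mul1g cons_letter_inl1.
case: w => [|[c|b] w] /=; rewrite ?(negPf a1) ?(negPf a'1) // => /and3P[c1 _ hw].
have [a'c1|a'c1] := eqVneq (a' * c)%g 1%g.
  have -> : c = (a'^-1)%g by rewrite -(mulKg a' c) a'c1 mulg1.
  rewrite -mulgA mulgV mulg1 /= (negPf a1).
  have [aa'1|] := eqVneq (a * a')%g 1%g; last by case: w hw => [|[]].
  by rewrite -(mulg1_eq aa'1) invgK; case: w hw => [|[]].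
rewrite mulgA.
have [aa'1|//] := eqVneq (a * a')%g 1%g.
by rewrite aa'1 mul1g (negPf c1).
Qed.

Lemma foldr_cons_letter_inl a u k : red u -> red k ->
  foldr cons k (cons (inl a) u) = cons (inl a) (foldr cons k u).
Proof.
have [->|a1] := eqVneq a 1%g; first by rewrite !cons_letter_inl1.
case: u => [|[c|c] u] ru rk.
- by rewrite cons_letter_reducedE //= a1.
- rewrite [cons _ (_ :: _)]/= (negPf a1) [foldr _ _ (_ :: _)]/=.
  rewrite cons_letter_inlM ?foldr_cons_reduced ?(reduced_behead ru) //.
  by have [->|] := eqVneq (a * c)%g 1%g; rewrite ?cons_letter_inl1.
- by rewrite cons_letter_reducedE //= a1 andbT; exact: ru.
Qed.

End Letters.

Lemma foldr_cons_letter (A B : groupType) (x : letter A B) u k :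
  reduced u -> reduced k ->
  foldr (@cons_letter A B) k (cons_letter x u) = cons_letter x (foldr (@cons_letter A B) k u).
Proof.
case: x => [a|b] ru rk; first exact: foldr_cons_letter_inl.
apply: (inj_map (can_inj (@swap_letterK A B))).
rewrite -cons_letter_swap -!foldr_cons_swap -cons_letter_swap.
by rewrite foldr_cons_letter_inl ?reduced_swap.
Qed.

Section FreeProductGroup.
Variables A B : groupType.
Local Notation cons := (@cons_letter A B).
Local Notation red := (@reduced A B).
Local Notation F := (foldr cons).

Lemma fp_reduced (g : free_product A B) : red (sval g).
Proof. by case: g. Qed.

Lemma foldr_cons_letterA u v w : red v -> red w -> F w (F v u) = F (F w v) u.
Proof.
move=> rv rw; elim: u => //= x u IH.
by rewrite foldr_cons_letter ?foldr_cons_reduced // IH.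
Qed.

Lemma foldr_cons_letter_nil u : red u -> F [::] u = u.
Proof.
elim: u => //= x u IH ru.
by rewrite IH ?(reduced_behead ru) // cons_letter_reducedE.
Qed.

Lemma foldl_inv_letterE acc u :
  foldl (fun acc x => cons (inv_letter x) acc) acc u = F acc (rev (map (@inv_letter A B) u)).
Proof. by elim: u acc => //= x u IH acc; rewrite IH rev_cons -cats1 foldr_cat. Qed.

Lemma foldr_cons_inv_letter u : red u -> F u (rev (map (@inv_letter A B) u)) = [::].
Proof.
elim: u => //= x u IH ru; rewrite rev_cons -cats1 foldr_cat /=.
case: x ru => [a|b] /= /and3P[x1 ru _]; rewrite invg_eq1 (negPf x1) mulVg eqxx;
  exact: IH.
Qed.

Lemma fp_mulA : associative (@fp_mul A B).
Proof. by move=> x y z; apply: val_inj; rewrite /= -foldr_cons_letterA ?fp_reduced. Qed.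

Lemma fp_mul1g : left_id (fp_one A B) (@fp_mul A B).
Proof. by move=> x; apply: val_inj. Qed.

Lemma fp_mulg1 : right_id (fp_one A B) (@fp_mul A B).
Proof. by move=> x; apply: val_inj; rewrite /= foldr_cons_letter_nil ?fp_reduced. Qed.

Lemma fp_mulVg : left_inverse (fp_one A B) (@fp_inv A B) (@fp_mul A B).
Proof.
move=> x; apply: val_inj.
rewrite /= foldl_inv_letterE foldr_cons_letterA ?fp_reduced //=.
by rewrite foldr_cons_inv_letter ?fp_reduced.
Qed.

Lemma fp_mulgV : right_inverse (fp_one A B) (@fp_inv A B) (@fp_mul A B).
Proof.
move=> x; set y := fp_inv x.
rewrite -[fp_mul x y]fp_mul1g -{1}(fp_mulVg y) -fp_mulA (fp_mulA y x y).
by rewrite /y fp_mulVg fp_mul1g fp_mulVg.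
Qed.

End FreeProductGroup.

HB.instance Definition _ (A B : groupType) :=
  Choice.copy (free_product A B) {w : seq (letter A B) | reduced w}.

HB.instance Definition _ (A B : groupType) := isGroup.Build (free_product A B)
  (@fp_mulA A B) (@fp_mul1g A B) (@fp_mulg1 A B) (@fp_mulVg A B) (@fp_mulgV A B).

Section CyclicallyReduced.
Variables A B : groupType.
Local Notation letter := (letter A B).
Local Notation red := (@reduced A B).

Lemma reducedE w :
  red w = all (@nontriv A B) w && sorted [rel x y | ~~ same_side x y] w.
Proof.
elim: w => //= x w ->; case: w => [|y w] /=; first by rewrite !andbT.
by case: (nontriv x); case: (nontriv y); case: (same_side x y); rewrite /= ?andbT ?andbF.
Qed.

Definition cyclically_reduced (w : seq letter) :=
  red w && (if w is x :: w' then ~~ same_side (last x w') x else true).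

Lemma reduced_flatten_nseq w n : cyclically_reduced w -> red (flatten (nseq n w)).
Proof.
case: w => [|x w]; first by elim: n.
rewrite /cyclically_reduced reducedE => /andP[/andP[nt sw] cyc].
elim: n => // n; rewrite [red _]reducedE => /andP[ntT sT].
rewrite reducedE [flatten _]/= -cat_cons all_cat nt ntT /= cat_path (sw : path _ x w) /=.
by case: n sT {ntT} => //= n ->; rewrite cyc.
Qed.

Lemma sval_mulg (g h : free_product A B) :
  sval (g * h)%g = foldr (@cons_letter A B) (sval h) (sval g).
Proof. by []. Qed.

Lemma foldr_cons_letter_cat s t : red (s ++ t) -> foldr (@cons_letter A B) t s = s ++ t.
Proof.
elim: s => //= x s IH rst.
by rewrite IH ?(reduced_behead rst) // cons_letter_reducedE.
Qed.

Lemma sval_expg (g : free_product A B) n :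
  cyclically_reduced (sval g) -> sval (g ^+ n)%g = flatten (nseq n (sval g)).
Proof.
move=> cg; elim: n => // n IH.
by rewrite expgS sval_mulg IH foldr_cons_letter_cat // (reduced_flatten_nseq n.+1 cg).
Qed.

End CyclicallyReduced.

Section Embeddings.
Variables A B : groupType.

Definition fp_inl (a : A) : free_product A B :=
  Sub _ (cons_letter_reduced (inl a) (isT : reduced [::])).

Lemma fp_inlM : {morph fp_inl : a a' / (a * a')%g}.
Proof.
move=> a a'; apply: val_inj.
change (cons_letter (inl (a * a')%g) [::]
  = foldr (@cons_letter A B) (cons_letter (inl a') [::]) (cons_letter (inl a) [::])).
by rewrite foldr_cons_letter ?cons_letter_reduced // cons_letter_inlM.
Qed.

Definition fp_swap (g : free_product A B) : free_product B A :=
  Sub _ (etrans (reduced_swap (sval g)) (fp_reduced g)).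

Lemma fp_swapM : {morph fp_swap : g h / (g * h)%g}.
Proof. by move=> g h; apply: val_inj; rewrite /= foldr_cons_swap. Qed.

Lemma fp_swap_morphism : monoid.monoid_morphism fp_swap.
Proof. by split; [apply: val_inj | exact: fp_swapM]. Qed.

End Embeddings.

Lemma fp_swapK (A B : groupType) : cancel (@fp_swap A B) (@fp_swap B A).
Proof. by move=> g; apply: val_inj; rewrite /= (mapK (@swap_letterK A B)). Qed.

Lemma homogenizationE (A B : groupType) (R : realType) (f : free_product A B -> R) :
  homogenization f = homog f.
Proof.
apply/funext => g; rewrite /homogenization /homog.
by under eq_fun do rewrite [fp_pow _ _]iter_mulg_1.
Qed.

Section Alternating.
Variables (R : realType) (G : groupType) (f : G -> R).
Hypothesis f_alt : alternating_qm (@monoid.inv G) f.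

Lemma alternating_qm1 : f 1%g = 0.
Proof.
have := f_alt 1%g; rewrite invg1 => /eqP.
by rewrite -addr_eq0 -mulr2n mulrn_eq0 => /eqP.
Qed.

Lemma alternating_qm_cancel x y : (x * y = 1)%g -> f x + f y = 0.
Proof. by move=> /mulg1_eq <-; rewrite f_alt subrr. Qed.

Lemma alternating_qm_def0 x y : [|| x == 1, y == 1 | x * y == 1]%g ->
  f (x * y)%g - f x - f y = 0.
Proof.
case/or3P=> /eqP e; first by rewrite e mul1g alternating_qm1; ring.
  by rewrite e mulg1 alternating_qm1; ring.
by rewrite e alternating_qm1 sub0r -opprD (alternating_qm_cancel e) oppr0.
Qed.

End Alternating.

Definition is_inl (A B : Type) (x : A + B) : bool := if x is inl _ then true else false.

Definition head_side (A B : Type) (w : seq (A + B)) : option bool :=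
  if w is x :: _ then Some (is_inl x) else None.

Section SplitQuasimorphism.
Variables (R : realType) (A B : groupType) (fA : A -> R) (fB : B -> R).
Hypotheses (altA : alternating_qm (@monoid.inv A) fA)
           (altB : alternating_qm (@monoid.inv B) fB).
Variables dA dB : R.
Hypotheses (fA_def : forall a a', `|fA (a * a')%g - fA a - fA a'| <= dA)
           (fB_def : forall b b', `|fB (b * b')%g - fB b - fB b'| <= dB).

Local Notation letter := (letter A B).
Local Notation cons := (@cons_letter A B).
Local Notation red := (@reduced A B).
Local Notation F := (foldr cons).

Definition letter_val (x : letter) : R := match x with inl a => fA a | inr b => fB b end.
Local Notation val w := (\sum_(x <- w) letter_val x).

Lemma split_qmE g : split_qm fA fB g = val (sval g).
Proof. by []. Qed.

Lemma cons_letter_val x w : red w -> nontriv x ->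
  cons x w = x :: w \/
  (head_side w = Some (is_inl x) /\
   (letter_val x + val w - val (cons x w) = 0 \/
    (`|letter_val x + val w - val (cons x w)| <= Num.max dA dB /\
     head_side (cons x w) = Some (is_inl x)))).
Proof.
move=> rw; case: x => [a|b] /= /negPf x1; rewrite x1.
- case: w rw => [|[c|c] w] rw; [by left | right | by left]; split => //.
  rewrite !big_cons /=; have [ac1|ac1] := eqVneq (a * c)%g 1%g.
    by left; rewrite addrA (alternating_qm_cancel altA ac1); ring.
  right; rewrite big_cons; split => //.
  have -> : fA a + (fA c + val w) - (fA (a * c)%g + val w)
    = - (fA (a * c)%g - fA a - fA c) by ring.
  by rewrite normrN le_max fA_def.
- case: w rw => [|[c|c] w] rw; [by left | by left | right]; split => //.
  rewrite !big_cons /=; have [bc1|bc1] := eqVneq (b * c)%g 1%g.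
    by left; rewrite addrA (alternating_qm_cancel altB bc1); ring.
  right; rewrite big_cons; split => //.
  have -> : fB b + (fB c + val w) - (fB (b * c)%g + val w)
    = - (fB (b * c)%g - fB b - fB c) by ring.
  by rewrite normrN le_max fB_def orbT.
Qed.

Lemma head_side_reduced x u : red (x :: u) -> head_side u != Some (is_inl x).
Proof. by case: u => [|y u] //= /and3P[_ _]; case: x y => ? [] ?. Qed.

(* The head-side invariant is what rules out a second merge. *)
Lemma foldr_cons_letter_val u v : red u -> red v ->
  let d := val u + val v - val (F v u) in
  d = 0 \/ (`|d| <= Num.max dA dB /\ head_side (F v u) = head_side u).
Proof.
move=> ru rv; elim: u ru => [|x u IH] ru /=; first by left; rewrite big_nil; ring.
have /and3P[x1 ru' _] := ru.
have := IH ru'; rewrite big_cons; set w := F v u => IHu.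
have rw : red w := foldr_cons_reduced u rv.
case: (cons_letter_val rw x1) => [->|[hsw cx]].
  rewrite big_cons (_ : _ - _ = val u + val v - val w); last by ring.
  by case: IHu => [->|[? _]]; [left | right].
case: IHu => [d0|[_ hsF]]; last by move: (head_side_reduced ru); rewrite -hsF hsw eqxx.
have e : forall t, letter_val x + val u + val v - t = letter_val x + val w - t.
  by move=> t; move: d0; set s := val w; lra.
by rewrite !e; case: cx => [->|]; [left | right].
Qed.

Local Notation f := (split_qm fA fB).

Lemma split_qm_bound g h : `|f (g * h)%g - f g - f h| <= Num.max dA dB.
Proof.
rewrite !split_qmE sval_mulg.
have := foldr_cons_letter_val (fp_reduced g) (fp_reduced h).
set d := _ - val _ => dP; rewrite (_ : _ - _ - _ = - d) ?normrN; last by rewrite /d; ring.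
case: dP => [->|[//]].
by rewrite normr0 le_max (le_trans (normr_ge0 _) (fA_def 1 1)).
Qed.

Lemma split_qm_inl a : f (fp_inl B a) = fA a.
Proof.
rewrite split_qmE /=.
by case: eqP => [->|_]; rewrite ?(alternating_qm1 altA) ?big_nil // big_cons big_nil addr0.
Qed.

Lemma split_qm_expg (g : free_product A B) n :
  cyclically_reduced (sval g) -> f (g ^+ n)%g = n%:R * f g.
Proof.
move=> cg; rewrite !split_qmE sval_expg //.
by elim: n => [|n IH]; rewrite ?big_nil ?mul0r //= big_cat IH -natr1 mulrDl mul1r addrC.
Qed.

Lemma homog_split_qm_cyclically_reduced (g : free_product A B) :
  cyclically_reduced (sval g) -> homog f g = f g.
Proof.
move=> cg; apply/eqP; rewrite -subr_eq0; apply/eqP.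
apply: (@natmul_norm_ub_eq0 _ _ (Num.max dA dB)) => n.
by rewrite mulrBr -split_qm_expg // distrC (homog_pow_close split_qm_bound).
Qed.

Lemma homog_split_qm_defect_inl (p : B) (s t : A) : p != 1%g ->
  exists g h : free_product A B,
    `|homog f (g * h)%g - homog f g - homog f h| = 2%:R * `|fA (s * t)%g - fA s - fA t|.
Proof.
move=> p1; have [triv|] := boolP [|| s == 1, t == 1 | s * t == 1]%g.
  exists 1%g, 1%g; rewrite (alternating_qm_def0 altA triv) normr0 mulr0 mulg1.
  by rewrite homog_split_qm_cyclically_reduced // split_qmE big_nil !subr0 normr0.
rewrite !negb_or => /and3P[s1 t1 st1]; pose m := (s * t)%g.
have rg : red [:: inl t; inr p; inl s; inr p] by rewrite /= p1 s1 t1.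
have rh : red [:: inr p^-1; inl t; inr p; inl s]%g by rewrite /= p1 s1 t1 invg_eq1 p1.
have rk : red [:: inr p; inl m; inr p; inl m] by rewrite /= p1 st1.
have rt : red [:: inl t] by rewrite /= t1.
pose g : free_product A B := Sub _ rg.
pose h : free_product A B := Sub _ rh.
pose k : free_product A B := Sub _ rk.
pose u : free_product A B := Sub _ rt.
(* g h = t p (st) p s is conjugate by t to k. *)
have ghu : (g * h * u = u * k)%g.
  apply: val_inj => /=.
  by do 3 rewrite ?(negPf p1, negPf s1, negPf t1, negPf st1, mulgV, eqxx) /=.
exists g, h.
have -> : (g * h)%g = (k ^ u^-1)%g by rewrite conjgE invgK mulgA -ghu mulgK.
rewrite (homog_conjg split_qm_bound).
rewrite !homog_split_qm_cyclically_reduced /cyclically_reduced ?rg ?rh ?rk //.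
rewrite !split_qmE /= !big_cons big_nil /= altB /m.
rewrite (_ : _ - _ - _ = 2%:R * (fA (s * t)%g - fA s - fA t)); last by ring.
by rewrite normrM ger0_norm.
Qed.

End SplitQuasimorphism.

Lemma split_qm_swap (R : realType) (A B : groupType) (fA : A -> R) (fB : B -> R) :
  split_qm fB fA \o @fp_swap A B = split_qm fA fB.
Proof. by apply/funext => g; rewrite /= !split_qmE big_map; apply: eq_bigr => -[]. Qed.

Section SplitQuasimorphismDefect.
Variables (R : realType) (A B : groupType) (fA : A -> R) (fB : B -> R).
Hypotheses (qA : is_quasimorphism *%g fA) (qB : is_quasimorphism *%g fB).
Hypotheses (altA : alternating_qm (@monoid.inv A) fA)
           (altB : alternating_qm (@monoid.inv B) fB).
Local Notation f := (split_qm fA fB).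

Lemma split_qm_bound_defect :
  forall g h, `|f (g * h)%g - f g - f h| <= Num.max (defect *%g fA) (defect *%g fB).
Proof. by move=> g h; exact: (split_qm_bound altA altB (defect_ub qA) (defect_ub qB)). Qed.

Lemma split_qm_defect_inl : (exists b : B, b != 1%g) ->
  defect *%g fA <= defect *%g f /\ defect *%g fA *+ 2 <= defect *%g (homog f).
Proof.
move=> [p p1]; have qf : is_quasimorphism *%g f by eexists; exact: split_qm_bound_defect.
have qhomog := ex_intro _ _ (homog_defect (defect_ub qf)) : is_quasimorphism *%g (homog f).
split.
  have -> : defect *%g fA = defect *%g (f \o fp_inl B).
    by congr defect; apply/funext => a; rewrite /= (split_qm_inl fB altA).
  exact: defect_comp_le (fp_inlM B) 1%g qf.
rewrite -mulr_natl -ler_pdivlMl ?ltr0n //.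
apply: (defect_le 1%g) => s t; rewrite ler_pdivlMl ?ltr0n //.
have [g [h <-]] := homog_split_qm_defect_inl altA altB (defect_ub qA) (defect_ub qB) s t p1.
exact: defect_ub.
Qed.

End SplitQuasimorphismDefect.

Theorem theorem3p3 (R : realType) (A B : groupType)
  (fA : A -> R) (fB : B -> R)
  (A_nontriv : exists a : A, a != 1%g) (B_nontriv : exists b : B, b != 1%g)
  (qA : is_quasimorphism (@monoid.mul A) fA) (qB : is_quasimorphism (@monoid.mul B) fB)
  (altA : alternating_qm (@monoid.inv A) fA) (altB : alternating_qm (@monoid.inv B) fB) :
  let f := split_qm fA fB in
  is_quasimorphism (@fp_mul A B) f /\
  gromov_norm_class (@fp_mul A B) f
    = defect (@fp_mul A B) (homogenization f) / 2 /\
  defect (@fp_mul A B) (homogenization f) / 2 = defect (@fp_mul A B) f /\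
  defect (@fp_mul A B) f = Num.max (defect (@monoid.mul A) fA) (defect (@monoid.mul B) fB) /\
  (forall beta : free_product A B -> R, bounded_cochain beta ->
     defect (@fp_mul A B) f <= defect (@fp_mul A B) (f \+ beta)).
Proof.
move=> f; rewrite homogenizationE.
have f_def := split_qm_bound_defect qA qB altA altB.
have qf : is_quasimorphism *%g f by eexists; exact: f_def.
have [dA_f dA_homog] := split_qm_defect_inl qA qB altA altB B_nontriv.
have [dB_f dB_homog] := split_qm_defect_inl qB qA altB altA A_nontriv.
rewrite -(split_qm_swap fB fA) (homog_comp_morph _ (fp_swap_morphism B A)) in dB_f dB_homog.
rewrite !(defect_comp_can _ (@fp_swapM B A) (@fp_swapK A B)) in dB_f dB_homog.
have Df : defect *%g f = Num.max (defect *%g fA) (defect *%g fB).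
  by apply/le_anti; rewrite ge_max dA_f dB_f (defect_le 1%g f_def).
have Dhomog : defect *%g (homog f) = defect *%g f *+ 2.
  apply/le_anti; rewrite defect_homog_le // Df.
  by case: (leP (defect *%g fA) (defect *%g fB)).
have f_min := defect_min_of_homog qf Dhomog.
have half : defect *%g f *+ 2 / 2 = defect *%g f by rewrite -mulr_natr; field.
rewrite gromov_norm_class_min // Dhomog half.
by do !split.
Qed.
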